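(* Let $\mathfrak{g}$ be a finite-dimensional Lie algebra over a field $K$ of characteristic zero with trivial center. Then every weakly inner CPA-structure on $\mathfrak{g}$ is inner.
   Context: A CPA-structure on $\mathfrak{g}$ is a bilinear product $x\cdot y$ satisfying, for all $x,y,z$: $x\cdot y=y\cdot x$; $[x,y]\cdot z=x\cdot(y\cdot z)-y\cdot(x\cdot z)$; $x\cdot[y,z]=[x\cdot y,z]+[y,x\cdot z]$. It is weakly inner if there is a linear map $\phi\in\mathrm{End}(V)$ of the underlying vector space with $x\cdot y=[\phi(x),y]$ for all $x,y$; it is inner if moreover $\phi$ can be taken to be a Lie algebra homomorphism $\mathfrak{g}\to\mathfrak{g}$. *)

From HB Require Import structures.
From mathcomp Require Import all_boot all_algebra.
Set Implicit Arguments. Unset Strict Implicit. Unset Printing Implicit Defensive.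
Import GRing.Theory.
Local Open Scope ring_scope.

Record lie_algebra (K : fieldType) (V : vectType K) (br : V -> V -> V) : Prop := {
  lie_linl : forall z (a : K) x y, br (a *: x + y) z = a *: br x z + br y z;
  lie_linr : forall z (a : K) x y, br z (a *: x + y) = a *: br z x + br z y;
  lie_alt : forall x, br x x = 0;
  lie_jacobi : forall x y z, br x (br y z) + br y (br z x) + br z (br x y) = 0 }.

Definition center_trivial (K : fieldType) (V : vectType K) (br : V -> V -> V) :=
  forall z : V, (forall x, br z x = 0) -> z = 0.

Record CPA_structure (K : fieldType) (V : vectType K) (br : V -> V -> V)
    (dot : V -> V -> V) : Prop := {
  cpa_linl : forall z (a : K) x y, dot (a *: x + y) z = a *: dot x z + dot y z;
  cpa_linr : forall z (a : K) x y, dot z (a *: x + y) = a *: dot z x + dot z y;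
  cpa_comm : forall x y, dot x y = dot y x;
  cpa_der1 : forall x y z, dot (br x y) z = dot x (dot y z) - dot y (dot x z);
  cpa_der2 : forall x y z, dot x (br y z) = br (dot x y) z + br y (dot x z) }.

Definition weakly_inner (K : fieldType) (V : vectType K) (br : V -> V -> V)
    (dot : V -> V -> V) :=
  exists phi : 'End(V), forall x y, dot x y = br (phi x) y.

Definition inner (K : fieldType) (V : vectType K) (br : V -> V -> V)
    (dot : V -> V -> V) :=
  exists phi : 'End(V),
    (forall x y, phi (br x y) = br (phi x) (phi y)) /\
    (forall x y, dot x y = br (phi x) y).

(* Write x.y = [phi x, y].  The first derivation axiom of the CPA-structure and
   the Jacobi identity give [phi [x, y], z] = [x, y].z = x.(y.z) - y.(x.z)
   = [[phi x, phi y], z] for every z, so phi [x, y] - [phi x, phi y] is central,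
   hence zero. *)

From mathcomp Require Import all_boot all_algebra.
Set Implicit Arguments. Unset Strict Implicit.
Import GRing.Theory.
Local Open Scope ring_scope.

Section LieBracket.

Variables (K : fieldType) (V : vectType K) (br : V -> V -> V).
Hypothesis Hlie : lie_algebra br.

Lemma lie_addl u v z : br (u + v) z = br u z + br v z.
Proof. by have := lie_linl Hlie z 1 u v; rewrite !scale1r. Qed.

Lemma lie_addr u v z : br z (u + v) = br z u + br z v.
Proof. by have := lie_linr Hlie z 1 u v; rewrite !scale1r. Qed.

Lemma lie_subl u v z : br (u - v) z = br u z - br v z.
Proof. by have := lie_linl Hlie z (-1) v u; rewrite !scaleN1r addrC [_ + br u z]addrC. Qed.

Lemma lie_subr u v z : br z (u - v) = br z u - br z v.
Proof. by have := lie_linr Hlie z (-1) v u; rewrite !scaleN1r addrC [_ + br z u]addrC. Qed.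

Lemma lie_oppr u z : br z (- u) = - br z u.
Proof.
have r0 : br z 0 = 0 by rewrite -{1}(subrr u) lie_subr subrr.
by rewrite -{1}(sub0r u) lie_subr r0 sub0r.
Qed.

Lemma lie_anticomm u v : br u v = - br v u.
Proof.
apply/eqP; rewrite -addr_eq0.
have := lie_alt Hlie (u + v).
by rewrite lie_addl !lie_addr !(lie_alt Hlie) add0r addr0 => ->.
Qed.

Lemma lie_jacobi_derivation a b z :
  br (br a b) z = br a (br b z) - br b (br a z).
Proof.
have := lie_jacobi Hlie a b z.
rewrite (lie_anticomm z a) lie_oppr (lie_anticomm z (br a b)).
by move/eqP; rewrite addr_eq0 opprK => /eqP.
Qed.

Lemma center_trivial_bracket_inj u v :
  center_trivial br -> (forall z, br u z = br v z) -> u = v.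
Proof.
move=> ctr eq_uv; apply/eqP; rewrite -subr_eq0; apply/eqP/ctr => z.
by rewrite lie_subl eq_uv subrr.
Qed.

End LieBracket.

Theorem lemma2p8 (K : fieldType) (V : vectType K) (br : V -> V -> V) :
  [pchar K] =i pred0 ->
  lie_algebra br ->
  center_trivial br ->
  forall dot : V -> V -> V,
    CPA_structure br dot -> weakly_inner br dot -> inner br dot.
Proof.
move=> _ Hlie ctr dot Hcpa [phi Hphi].
exists phi; split=> // x y.
apply: (center_trivial_bracket_inj Hlie ctr) => z.
by rewrite (lie_jacobi_derivation Hlie) -!Hphi -(cpa_der1 Hcpa).
Qed.
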